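(* Let $R_1,R_2\in\mathbb R^{r\times n}$ and let $\mathcal R=\ker([R_1\ \ -R_2])\subseteq\mathbb R^n\times\mathbb R^n$ (so $(x,x')\in\mathcal R\iff R_1x=R_2x'$) be a total relation. Then $\mathcal R$ is an equivalence relation on $\mathbb R^n$ if and only if $R_1=R_2$.
   Context: A relation $\mathcal R\subseteq\mathbb R^n\times\mathbb R^n$ is total if every $x\in\mathbb R^n$ appears as a first component of some pair in $\mathcal R$ and every $x'\in\mathbb R^n$ appears as a second component of some pair in $\mathcal R$. *)

From HB Require Import structures.
From mathcomp Require Import all_boot all_order all_algebra.
From mathcomp Require Import reals.
Set Implicit Arguments. Unset Strict Implicit. Unset Printing Implicit Defensive.
Import Order.TTheory GRing.Theory Num.Theory.
Local Open Scope ring_scope.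

Definition kerrel (R : realType) (r n : nat) (R1 R2 : 'M[R]_(r, n))
  (x x' : 'cV[R]_n) : Prop :=
  row_mx R1 (- R2) *m col_mx x x' = 0.

Definition total_relation (T : Type) (Rl : T -> T -> Prop) : Prop :=
  (forall x, exists x', Rl x x') /\ (forall x', exists x, Rl x x').

Definition equivalence_relation (T : Type) (Rl : T -> T -> Prop) : Prop :=
  [/\ (forall x, Rl x x),
      (forall x y, Rl x y -> Rl y x) &
      (forall x y z, Rl x y -> Rl y z -> Rl x z)].

From HB Require Import structures.
From mathcomp Require Import all_boot all_order all_algebra.
From mathcomp Require Import reals.
Import GRing.Theory.
Local Open Scope ring_scope.

(* Reflexivity alone forces [R1 *m x = R2 *m x] for every [x], hence [R1 = R2];
   conversely [R1 x = R1 x'] is the kernel relation of the map [x |-> R1 x],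
   which is an equivalence. *)

Lemma kerrelE (R : realType) (r n : nat) (R1 R2 : 'M[R]_(r, n)) x x' :
  kerrel R1 R2 x x' <-> R1 *m x = R2 *m x'.
Proof.
rewrite /kerrel mul_row_col mulNmx; split=> [/eqP | ->].
  by rewrite subr_eq0 => /eqP.
by rewrite subrr.
Qed.

Lemma mulmx_colP (F : fieldType) (m n : nat) (A B : 'M[F]_(m, n)) :
  (forall x : 'cV_n, A *m x = B *m x) -> A = B.
Proof.
move=> eqAB; apply: trmx_inj; apply/eqP/mulmxP => u.
by rewrite -[u]trmxK -!trmx_mul eqAB.
Qed.

Lemma kerrel_refl_eq (R : realType) (r n : nat) (R1 R2 : 'M[R]_(r, n)) :
  (forall x, kerrel R1 R2 x x) -> R1 = R2.
Proof. by move=> refl; apply: mulmx_colP => x; apply/kerrelE. Qed.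

Lemma kerrel_equivalence (R : realType) (r n : nat) (A : 'M[R]_(r, n)) :
  equivalence_relation (kerrel A A).
Proof.
split=> [x | x y /kerrelE eq_xy | x y z /kerrelE eq_xy /kerrelE eq_yz];
  apply/kerrelE => //.
by rewrite eq_xy.
Qed.

Theorem proposition5 (R : realType) (r n : nat) (R1 R2 : 'M[R]_(r, n)) :
  total_relation (kerrel R1 R2) ->
  (equivalence_relation (kerrel R1 R2) <-> R1 = R2).
Proof.
move=> _; split=> [[refl _ _] | <-].
  exact: kerrel_refl_eq.
exact: kerrel_equivalence.
Qed.
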